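(* Let $F\neq\mathbb{RP}^2$ be a surface and $D$ a link diagram in $F$ with $n$ crossings ordered $v_1,\dots,v_n$. Let $d^+(S)=\sum_v(-1)^{t^+(S,v)}d_v(S)$, where $t^+(S,v)$ is the number of $+1$ markers of $S$ at crossings greater than $v$. For an enhanced state $S$ let $u(S)$ be the number of crossings $v_i$ with marker $+1$ in $S$ such that $i\equiv n+1\pmod 2$, and set $g(S)=(-1)^{u(S)}S$. Then $g$ induces an isomorphism of chain complexes $g:(C(D),d)\to(C(D),d^+)$.
   Context: A link diagram in $F$ is a finite collection of generically immersed closed curves with finitely many crossings with over/under information. The $(+1)$-/$(-1)$-smoothing of a crossing is the one with coefficient $A$/$A^{-1}$ in $L_p=AL_0+A^{-1}L_\infty$. An enhanced state assigns markers $\pm1$ to crossings and labels $\pm$ to the resulting circles. A circle is trivial if it bounds a disk in $F$, bounding if it bounds a disk or a Möbius band; $\mathcal C(F)$ = unoriented unbounding simple closed curves in $F$ up to homotopy. $I(S)=\#\{+1\}-\#\{-1\}$ markers, $\tau(S)=\#$(trivial circles labeled $+$)$-\#$(trivial labeled $-$), $J=I+2\tau$, $\Psi(S)=\sum\varepsilon_k\gamma_k$ over unbounding circles with labels $\varepsilon_k$. $C_{ijs}(D)$ is free abelian on enhanced states with $(I,J,\Psi)=(i,j,s)$, $C(D)=\bigoplus C_{ijs}(D)$. $[S:S']_v=1$ iff (a) $v$ has marker $+1$ in $S$ and $-1$ in $S'$, (b) other markers agree, (c) circles common to $S,S'$ have equal labels, (d) $J(S)=J(S')$, $\Psi(S)=\Psi(S')$;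 else $0$. $d_v(S)=\sum_{S'}[S:S']_vS'$; $t(S,v)$ = number of $-1$ markers of $S$ at crossings greater than $v$; $d(S)=\sum_v(-1)^{t(S,v)}d_v(S)$. *)

From HB Require Import structures.
From mathcomp Require Import all_boot all_order all_algebra.
Set Implicit Arguments. Unset Strict Implicit. Unset Printing Implicit Defensive.
Import Order.TTheory GRing.Theory Num.Theory.
Local Open Scope ring_scope.

(* Combinatorial data of a link diagram D with n crossings in a surface F
   (F <> RP^2), as consumed by the definitions of the chain complex:
   - crossings are 'I_n, v_i being the ordinal i-1 (order = order of 'I_n);
   - a marker assignment is m : {ffun 'I_n -> bool} (true = marker +1);
   - Circ is a finite type of all circles arising in the smoothings;
     dcirc m is the set of circles of the state with markers m
     (circles common to two states are the common elements);
   - dtriv c : c bounds a disk in F;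
   - dcls c = None iff c is bounding (bounds a disk or a Moebius band),
     otherwise dcls c = Some g with g its class in C(F) (restricted to the
     finitely many classes that occur, collected in the finite type Gam). *)
Record diagram := Diagram {
  dn : nat;
  Circ : finType;
  dcirc : {ffun 'I_dn -> bool} -> {set Circ};
  dtriv : Circ -> bool;
  Gam : finType;
  dcls : Circ -> option Gam;
  dtriv_bounding : forall c, dtriv c -> dcls c = None
}.

Section EnhancedStates.
Variable D : diagram.

Definition markers_t := {ffun 'I_(dn D) -> bool}.
Definition labels_t := {ffun Circ D -> bool}.

(* enhanced state: markers and labels (true = '+') on its circles; labels of
   circles not in the state are normalised to false *)
Definition wf_state (p : markers_t * labels_t) : bool :=
  [forall c, (c \notin dcirc p.1) ==> ~~ p.2 c].

Definition estate := {p : markers_t * labels_t | wf_state p}.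

Definition mk (S : estate) : markers_t := (val S).1.
Definition lb (S : estate) : labels_t := (val S).2.
Definition circles (S : estate) : {set Circ D} := dcirc (mk S).

Definition Ival (S : estate) : int :=
  (#|[set v | mk S v]|%:Z - #|[set v | ~~ mk S v]|%:Z).
Definition tau (S : estate) : int :=
  (#|[set c in circles S | dtriv c && lb S c]|%:Z
   - #|[set c in circles S | dtriv c && ~~ lb S c]|%:Z).
Definition Jval (S : estate) : int := Ival S + 2 * tau S.
Definition Psi (S : estate) : {ffun Gam D -> int} :=
  [ffun g => \sum_(c in circles S | dcls c == Some g)
               (if lb S c then 1 else -1)].

Definition incid (v : 'I_(dn D)) (S S' : estate) : bool :=
  [&& mk S v, ~~ mk S' v,
      [forall w, (w != v) ==> (mk S w == mk S' w)],
      [forall c, ((c \in circles S) && (c \in circles S'))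
                   ==> (lb S c == lb S' c)],
      Jval S == Jval S' & Psi S == Psi S'].

Definition tminus (S : estate) (v : 'I_(dn D)) : nat :=
  #|[set w : 'I_(dn D) | (v < w)%N && ~~ mk S w]|.
Definition tplus (S : estate) (v : 'I_(dn D)) : nat :=
  #|[set w : 'I_(dn D) | (v < w)%N && mk S w]|.

Definition chains := {ffun estate -> int}.

Definition diff (t : estate -> 'I_(dn D) -> nat) (x : chains) : chains :=
  [ffun S' => \sum_S \sum_v x S * (-1) ^+ (t S v) * (incid v S S')%:Z].

Definition d := diff tminus.
Definition dplus := diff tplus.

Definition ucount (S : estate) : nat :=
  #|[set v : 'I_(dn D) | mk S v && (odd (val v).+1 == odd (dn D).+1)]|.

Definition gmap (x : chains) : chains := [ffun S => (-1) ^+ (ucount S) * x S].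

End EnhancedStates.

(* The signs (-1)^t(S,v) and (-1)^t^+(S,v) differ by (-1)^(t(S,v) + t^+(S,v)),
   and t(S,v) + t^+(S,v) = n - i counts all crossings after v = v_i.  For an
   incidence [S:S']_v only the marker at v changes, from +1 to -1, so
   u(S) - u(S') is 1 exactly when i = n+1 mod 2, i.e. when n - i is odd.  Hence
   (-1)^u(S') (-1)^t(S,v) = (-1)^u(S) (-1)^t^+(S,v) on every incidence, which
   says g d = d^+ g term by term; g is an involution, hence bijective. *)
From mathcomp Require Import all_boot all_order all_algebra.
Import GRing.Theory.
Local Open Scope ring_scope.

Lemma card_ord_gt n (v : 'I_n) : #|[set w : 'I_n | (v < w)%N]| = (n - v.+1)%N.
Proof.
rewrite -sum1_card -[RHS]muln1 -sum_nat_const_nat big_geq_mkord.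
by apply: eq_bigl => w; rewrite inE.
Qed.

Section Signs.
Variable D : diagram.
Implicit Types (S : estate D) (v : 'I_(dn D)).

Lemma tminus_add_tplus S v : (tminus S v + tplus S v)%N = (dn D - v.+1)%N.
Proof.
rewrite -card_ord_gt -(cardsID [set w | mk S w]) addnC.
by congr (_ + _)%N; apply: eq_card => w; rewrite !inE andbC.
Qed.

Lemma odd_tminus_add_tplus S v :
  odd (tminus S v + tplus S v) = (odd v.+1 == odd (dn D).+1).
Proof.
rewrite tminus_add_tplus oddB ?ltn_ord //=.
by case: (odd (dn D)); case: (odd v.+1).
Qed.

Lemma ucount_switch S S' v :
    mk S v -> ~~ mk S' v -> (forall w, w != v -> mk S w = mk S' w) ->
  ucount S = ((odd v.+1 == odd (dn D).+1) + ucount S')%N.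
Proof.
move=> Sv S'v agree; rewrite /ucount.
set A := [set w | mk S' w && (odd (val w).+1 == odd (dn D).+1)].
have vNA : v \notin A by rewrite inE (negbTE S'v).
case parity: (odd v.+1 == odd (dn D).+1).
- have := cardsU1 v A; rewrite vNA => <-; apply: eq_card => w; rewrite !inE.
  by case: (eqVneq w v) => [->|/agree ->]; rewrite ?Sv ?parity.
- apply: eq_card => w; rewrite !inE.
  by case: (eqVneq w v) => [->|/agree ->]; rewrite ?parity ?andbF.
Qed.

Lemma incid_sign S S' v : incid v S S' ->
  (-1) ^+ ucount S' * (-1) ^+ tminus S v
  = (-1) ^+ ucount S * (-1) ^+ tplus S v :> int.
Proof.
case/and4P => Sv S'v /forallP agree _.
have agree' w : w != v -> mk S w = mk S' w by move=> wv; apply/eqP/(implyP (agree w)).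
rewrite (@ucount_switch S S' v Sv S'v agree') -(odd_tminus_add_tplus S v) -!exprD.
rewrite -signr_odd -[in RHS]signr_odd !oddD.
by case: (odd (tplus S v)); case: (odd (tminus S v)); case: (odd (ucount S')).
Qed.

Lemma gmapD : {morph gmap (D := D) : x y / x + y}.
Proof. by move=> x y; apply/ffunP => S; rewrite !ffunE mulrDr. Qed.

Lemma gmapK : involutive (gmap (D := D)).
Proof.
by move=> x; apply/ffunP => S; rewrite !ffunE mulrA -expr2 sqrr_sign mul1r.
Qed.

Lemma gmap_diff (t t' : estate D -> 'I_(dn D) -> nat) :
    (forall S S' v, incid v S S' ->
       (-1) ^+ ucount S' * (-1) ^+ t S v = (-1) ^+ ucount S * (-1) ^+ t' S v :> int) ->
  forall x, gmap (diff t x) = diff t' (gmap x).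
Proof.
move=> sign x; apply/ffunP => S'; rewrite !ffunE mulr_sumr.
apply: eq_bigr => S _; rewrite mulr_sumr; apply: eq_bigr => v _.
rewrite ffunE; case incSv: (incid v S S'); last by rewrite !mulr0.
by rewrite !mulr1 mulrCA sign // mulrA [x S * _]mulrC.
Qed.

End Signs.

Theorem proposition9p2 (D : diagram) :
  [/\ {morph (@gmap D) : x y / x + y},
      bijective (@gmap D) &
      forall x : chains D, gmap (d x) = dplus (gmap x)].
Proof.
split.
- exact: gmapD.
- exact: inv_bij (@gmapK D).
- exact: gmap_diff (@incid_sign D).
Qed.
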